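(* For any prime power $q$, there exists a $(q^2+q+1,\ q^2+q+1,\ q^2,\ q^2+q+1)$ placement delivery array, which realizes a $(q^2+q+1)$-division $(K=q^2+q+1,M,N)$ coded caching scheme with memory ratio $\frac{M}{N}=\frac{q^2}{q^2+q+1}$ and transmission load $R=1$.
   Context: A $(K,F,Z,S)$ placement delivery array (PDA) is an $F\times K$ array $\mathbf{P}=(p_{j,k})$ with entries from $\{*\}\cup\{1,\dots,S\}$ such that: (C1) each column contains exactly $Z$ stars; (C2) each integer of $\{1,\dots,S\}$ occurs at least once; (C3) for any two distinct entries $p_{j_1,k_1}=p_{j_2,k_2}=s$ (an integer) we have $j_1\neq j_2$, $k_1\neq k_2$, and $p_{j_1,k_2}=p_{j_2,k_1}=*$. A $(K,M,N)$ coded caching system consists of a server storing $N$ equal-size files and $K$ users each with a cache of size $M$ files, connected by an error-free shared broadcast link. An $F$-division scheme splits each file into $F$ equal-size packets placed (uncoded) in caches independently of demands; in delivery each user requests one file and the server broadcasts XORs of packets so every user decodes its request. The load $R$ is the worst-case normalized broadcast size; $M/N$ is the memory ratio. A $(K,F,Z,S)$ PDA realizes an $F$-division scheme with $M/N=Z/F$ and $R=S/F$. *)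

From mathcomp Require Import all_boot all_order all_algebra.
Unset Printing Implicit Defensive.

(* A (K,F,Z,S) placement delivery array: an F x K array whose entries are
   either a star (None) or an integer s in {1..S}, encoded as Some s with
   s : 'I_S (i.e. integer s+1 is represented by the ordinal s).
   Rows are indexed by 'I_F (packets), columns by 'I_K (users). *)
Definition is_PDA (K F Z S : nat) (P : 'I_F -> 'I_K -> option 'I_S) : Prop :=
  (forall k : 'I_K, #|[set j : 'I_F | P j k == None]| = Z) /\
  (forall s : 'I_S, exists (j : 'I_F) (k : 'I_K), P j k = Some s) /\
  (forall (j1 j2 : 'I_F) (k1 k2 : 'I_K) (s : 'I_S),
      (j1, k1) != (j2, k2) -> P j1 k1 = Some s -> P j2 k2 = Some s ->
      [/\ j1 != j2, k1 != k2, P j1 k2 = None & P j2 k1 = None]).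

Definition is_PDA_exists (K F Z S : nat) : Prop :=
  exists P : 'I_F -> 'I_K -> option 'I_S, is_PDA K F Z S P.

Definition pda_memory_ratio (F Z : nat) : rat := (Z%:R / F%:R)%R.
Definition pda_load (F S : nat) : rat := (S%:R / F%:R)%R.

Definition prime_power (q : nat) : Prop :=
  exists p e : nat, prime p /\ 0 < e /\ q = p ^ e.

(* Index rows and columns by Z/n with n = q^2 + q + 1 and call d = k - j the
   gap of the cell (j, k).  The cells with gap in {0, ..., q} form a cyclic
   band of width q + 1, so every column has n - (q + 1) = q^2 stars, and the
   band cell (j, k) gets the label j + (q + 1) d.  Two band cells with label s
   are (s - (q + 1) d1, s - q d1) and (s - (q + 1) d2, s - q d2), so the gap of
   the crossing cell (j1, k2) is congruent to (q + 1) d1 - q d2.  If it were a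
   band gap e, then (q + 1) d1 = e + q d2 modulo n; both sides lie below n, and
   comparing them as base-q expansions with digits at most q forces
   d1 = d2 = e, i.e. the two cells coincide. *)

From mathcomp Require Import all_boot all_order all_algebra.
From mathcomp Require Import zify.

(* The residue of k - j modulo n, written without truncated subtraction
   for j <= n. *)
Definition cdist (n j k : nat) : nat := (k + (n - j)) %% n.

Lemma cdist_lt n j k : 0 < n -> cdist n j k < n.
Proof. exact: ltn_pmod. Qed.

Lemma cdistP n j k : j <= n -> j + cdist n j k = k %[mod n].
Proof. by move=> le_jn; rewrite modnDmr addnCA subnKC // modnDr. Qed.

Lemma ord_eq_mod n (i1 i2 : 'I_n) : i1 = i2 %[mod n] -> i1 = i2.
Proof. by rewrite !modn_small // => /val_inj. Qed.

Lemma cdist_ord_inj n (j1 j2 k : 'I_n) :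
  cdist n j1 k = cdist n j2 k -> j1 = j2.
Proof.
move=> eq_d; apply: ord_eq_mod.
have e1 : j1 + cdist n j1 k = k %[mod n] by rewrite cdistP // ltnW.
have e2 : j2 + cdist n j2 k = k %[mod n] by rewrite cdistP // ltnW.
rewrite eq_d in e1.
by apply/eqP; rewrite -(eqn_modDr (cdist n j2 k)) e1 e2.
Qed.

Lemma card_ord_gt n m : #|[set i : 'I_n | m < i]| = n - m.+1.
Proof.
rewrite -sum1_card.
have := @big_geq_mkord _ 0 addn m.+1 n predT (fun=> 1).
rewrite sum_nat_const_nat muln1 => ->.
by apply: eq_bigl => i; rewrite inE.
Qed.

Lemma digits_eq q a b c : a <= q -> b <= q -> c <= q ->
  q.+1 * a = b + q * c -> a = c /\ b = c.
Proof.
move=> le_aq le_bq le_cq eq_ac.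
have a_c : a = c by nia.
by rewrite a_c mulSn in eq_ac; split=> //; lia.
Qed.

Section CyclicBand.

Variable q : nat.
Local Notation n := (q ^ 2 + q + 1).

Lemma band_digits_eq a b c : a <= q -> b <= q -> c <= q ->
  q.+1 * a = b + q * c %[mod n] -> a = c /\ b = c.
Proof.
move=> le_aq le_bq le_cq.
have lt_a : q.+1 * a < n.
  by rewrite mulSn addn1 ltnS -mulnn addnC leq_add // leq_mul.
have lt_bc : b + q * c < n.
  by rewrite addn1 ltnS -mulnn addnC leq_add // leq_mul.
by rewrite !modn_small // => /digits_eq; apply.
Qed.

Lemma band_size_gt0 : 0 < n.
Proof. by rewrite addn1. Qed.

(* The label j + (q + 1) d is congruent to (q^2 + 1) j + (q + 1) k. *)
Definition band_pda (j k : 'I_n) : option 'I_n :=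
  if cdist n j k <= q
  then Some (Ordinal (ltn_pmod (j + q.+1 * cdist n j k) band_size_gt0))
  else None.

Lemma band_pda_None j k : (band_pda j k == None) = (q < cdist n j k).
Proof. by rewrite /band_pda ltnNge; case: ifP. Qed.

Lemma band_pdaP {j k s} : band_pda j k = Some s ->
  cdist n j k <= q /\ s = j + q.+1 * cdist n j k %[mod n].
Proof. by rewrite /band_pda; case: ifP => // le_dq [<-]; rewrite /= modn_mod. Qed.

Lemma band_pda_diag (s : 'I_n) : band_pda s s = Some s.
Proof.
have d0 : cdist n s s = 0 by rewrite /cdist subnKC ?modnn // ltnW.
rewrite /band_pda d0; congr Some; apply: val_inj.
by rewrite /= muln0 addn0 modn_small.
Qed.

Lemma band_pda_cross {j1 k1 j2 k2 s} :
  band_pda j1 k1 = Some s -> band_pda j2 k2 = Some s ->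
  cdist n j1 k2 <= q -> j1 = j2 /\ k1 = k2.
Proof.
move=> /band_pdaP [le_d1q s_j1] /band_pdaP [le_d2q s_j2] le_eq.
set d1 := cdist n j1 k1 in le_d1q s_j1; set d2 := cdist n j2 k2 in le_d2q s_j2.
set e := cdist n j1 k2 in le_eq.
have k1_j1 : j1 + d1 = k1 %[mod n] by rewrite cdistP // ltnW.
have k2_j2 : j2 + d2 = k2 %[mod n] by rewrite cdistP // ltnW.
have k2_j1 : j1 + e = k2 %[mod n] by rewrite cdistP // ltnW.
have : j1 + q.+1 * d1 = j1 + (e + q * d2) %[mod n].
  rewrite -s_j1 s_j2 mulSn addnA -modnDml k2_j2 modnDml.
  by rewrite addnA -[in RHS]modnDml k2_j1 modnDml.
move/eqP; rewrite eqn_modDl => /eqP /band_digits_eq [] // d1_d2 e_d2.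
have j1_j2 : j1 = j2.
  apply/ord_eq_mod/eqP; rewrite -(eqn_modDr d2) -{1}e_d2.
  by rewrite k2_j1 k2_j2.
split=> //; apply/ord_eq_mod.
by rewrite -k1_j1 d1_d2 -e_d2 k2_j1.
Qed.

Lemma band_pda_far {j1 k1 j2 k2 s} : (j1, k1) != (j2, k2) ->
  band_pda j1 k1 = Some s -> band_pda j2 k2 = Some s -> q < cdist n j1 k2.
Proof.
move=> ne P1 P2; rewrite ltnNge; apply: contra ne => le_eq.
by have [-> ->] := band_pda_cross P1 P2 le_eq.
Qed.

Lemma band_pda_stars (k : 'I_n) : #|[set j | band_pda j k == None]| = q ^ 2.
Proof.
pose gap (j : 'I_n) := Ordinal (@cdist_lt n j k band_size_gt0).
have gap_inj : injective gap.
  by move=> j1 j2 /(congr1 val) /cdist_ord_inj.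
have -> : [set j | band_pda j k == None] = gap @^-1: [set d : 'I_n | q < d].
  by apply/setP => j; rewrite !inE band_pda_None.
by rewrite card_preimset // card_ord_gt addn1 subSS addnK.
Qed.

Lemma band_pda_is_PDA : is_PDA n n (q ^ 2) n band_pda.
Proof.
split; [exact: band_pda_stars | split].
  by move=> s; exists s, s; apply: band_pda_diag.
move=> j1 j2 k1 k2 s ne P1 P2.
have ne' : (j2, k2) != (j1, k1) by rewrite eq_sym.
have far12 := band_pda_far ne P1 P2; have far21 := band_pda_far ne' P2 P1.
split; last 2 first.
- by apply/eqP; rewrite band_pda_None.
- by apply/eqP; rewrite band_pda_None.
- apply: contraTneq far12 => ->; rewrite -leqNgt.
  by have [] := band_pdaP P2.
- apply: contraTneq far12 => <-; rewrite -leqNgt.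
  by have [] := band_pdaP P1.
Qed.

End CyclicBand.

Theorem corollary2 (q : nat) :
  prime_power q ->
  is_PDA_exists (q ^ 2 + q + 1) (q ^ 2 + q + 1) (q ^ 2) (q ^ 2 + q + 1) /\
  pda_memory_ratio (q ^ 2 + q + 1) (q ^ 2)
    = ((q ^ 2)%:R / (q ^ 2 + q + 1)%:R)%R /\
  pda_load (q ^ 2 + q + 1) (q ^ 2 + q + 1) = 1%R.
Proof.
move=> _; split; first by exists (band_pda q); apply: band_pda_is_PDA.
split; first by [].
by rewrite /pda_load GRing.divff // Num.Theory.pnatr_eq0 -lt0n band_size_gt0.
Qed.
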